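(* Let $p\ge2$ and $\delta>0$, and let $n$ be sufficiently large. Let $G$ be a graph on $n$ vertices and let $V(G)=V_1\cup\dots\cup V_p$ be a partition with $|E(V_1)|+\dots+|E(V_p)|<\delta^2n^2$. Then at most $2^{t(n,p)-1}$ orientations of $G$ are not relevant (with respect to this partition and $\delta$).
   Context: $E(V_i)$ is the set of edges of $G$ with both ends in $V_i$; $t(n,p)$ is the number of edges of the complete balanced $p$-partite graph on $n$ vertices. Given a partition $V(G)=V_1\cup\dots\cup V_p$ and $\delta>0$, an orientation $\vec G$ of $G$ is relevant if for every $i\neq j$ and all $X_1\subseteq V_i$, $X_2\subseteq V_j$ with $|X_1|,|X_2|>2\delta n$, there are at least $|X_1||X_2|/10$ edges of $\vec G$ directed from $X_1$ to $X_2$. *)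

From HB Require Import structures.
From mathcomp Require Import all_boot all_order all_algebra.
From mathcomp Require Import reals.
Set Implicit Arguments. Unset Strict Implicit. Unset Printing Implicit Defensive.
Import Order.TTheory GRing.Theory Num.Theory.

(* A graph on n vertices: vertex set 'I_n, adjacency [adj] (assumed
   symmetric and irreflexive in the theorem).  A partition into p parts
   is a map [part : 'I_n -> 'I_p], V_i = part^-1(i). *)

Definition edges_in n p (adj : rel 'I_n) (part : 'I_n -> 'I_p) (i : 'I_p) : nat :=
  #|[set xy : 'I_n * 'I_n | [&& (xy.1 < xy.2)%N, adj xy.1 xy.2,
                              part xy.1 == i & part xy.2 == i]]|.

(* t(n,p): edges of the complete balanced p-partite graph on n vertices:
   n mod p parts of size n %/ p + 1 and the rest of size n %/ p. *)
Definition turan (n p : nat) : nat :=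
  'C(n, 2) - ((n %% p) * 'C((n %/ p).+1, 2) + (p - n %% p) * 'C(n %/ p, 2)).

(* An orientation of adj: o (x,y) = true means the edge xy is directed x -> y. *)
Definition is_orientation n (adj : rel 'I_n) (o : {ffun 'I_n * 'I_n -> bool}) : bool :=
  [forall x : 'I_n, forall y : 'I_n,
     (o (x, y) ==> adj x y) && (adj x y ==> (o (x, y) != o (y, x)))].

Definition dir_edges n (o : {ffun 'I_n * 'I_n -> bool}) (X1 X2 : {set 'I_n}) : nat :=
  #|[set xy : 'I_n * 'I_n | [&& xy.1 \in X1, xy.2 \in X2 & o xy]]|.

Local Open Scope ring_scope.

Definition relevant (R : realType) n p (delta : R) (part : 'I_n -> 'I_p)
    (o : {ffun 'I_n * 'I_n -> bool}) : bool :=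
  [forall i : 'I_p, forall j : 'I_p, forall X1 : {set 'I_n}, forall X2 : {set 'I_n},
    [&& i != j, X1 \subset [set x | part x == i], X2 \subset [set x | part x == j],
        2 * delta * n%:R < #|X1|%:R & 2 * delta * n%:R < #|X2|%:R] ==>
    ((#|X1| * #|X2|)%:R / 10%:R <= (dir_edges o X1 X2)%:R :> R)].

From mathcomp Require Import all_boot all_order all_algebra.
From mathcomp Require Import reals unstable.
From mathcomp Require Import ring lra zify.
Import Order.TTheory GRing.Theory Num.Theory.
Set Implicit Arguments. Unset Strict Implicit. Unset Printing Implicit Defensive.

(* A non-relevant orientation has a witness (i, j, X1, X2), and there are at
   most p ^ 2 4 ^ n witnesses.  For a fixed witness the orientation is
   determined by its arcs from X1 to X2, a subset of X1 * X2 of size less than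
   |X1||X2| / 10 (about 2 ^ (8 |X1||X2| / 15) choices), and by its restriction to
   the edges not joining X1 and X2, of which there are at most
   e + t(n, p) + p - |X1||X2|, where e = sum_i |E(V_i)|, because pairs of X1 * X2
   lie in distinct blocks.
   Since |X1||X2| > 4 delta ^ 2 n ^ 2 dominates both e and n, each witness
   accounts for at most 2 ^ (t(n, p) - 1) / (p ^ 2 4 ^ n) orientations. *)

Lemma card_cover_leq_half (T I : finType) (P : pred I) (B : I -> {set T})
    (S : {set T}) (m : nat) :
  S \subset \bigcup_(i | P i) B i ->
  (forall i, P i -> #|I| * (2 * #|B i|) <= 2 ^ m) -> #|S| <= 2 ^ (m - 1).
Proof.
move=> cover hB.
apply: leq_trans (subset_leq_card cover) _; apply: leq_trans (card_big_setU _ _ _) _.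
suff h2 : 2 * \sum_(i | P i) #|B i| <= 2 ^ m.
  by case: m {hB} h2 => [|m]; rewrite ?subn1 ?expnS /=; lia.
have [i0 Pi0 | noP] := pickP P; last by rewrite big_pred0.
have I_gt0 : 0 < #|I| by apply/card_gt0P; exists i0.
rewrite -(leq_pmul2l I_gt0) big_distrr /= big_distrr /=.
apply: leq_trans (_ : \sum_(i | P i) 2 ^ m <= _); first exact: leq_sum.
by rewrite sum_nat_const leq_mul2r max_card orbT.
Qed.

Definition small_subsets (T : finType) (U : {set T}) : {set {set T}} :=
  [set A : {set T} | (A \subset U) && (10 * #|A| < #|U|)].

Lemma card_small_subsets (T : finType) (U : {set T}) :
  #|small_subsets U| * 4 ^ (#|U| - #|U| %/ 10) <= 5 ^ #|U|.
Proof.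
set N := #|U|.
have cover : small_subsets U \subset
    \bigcup_(k < N.+1 | 10 * k < N) [set A : {set T} | A \subset U & #|A| == k].
  apply/subsetP => A; rewrite inE => /andP[AU HA].
  have lt : #|A| < N.+1 by rewrite ltnS subset_leq_card.
  by apply/bigcupP; exists (Ordinal lt) => //; rewrite inE AU /=.
have cover_le := leq_trans (subset_leq_card cover) (card_big_setU _ _ _).
apply: leq_trans (leq_mul cover_le (leqnn _)) _.
rewrite big_distrl /= (_ : 5 = 4 + 1) // expnDn.
rewrite [X in _ <= X](bigID (fun k : 'I_N.+1 => 10 * k < N)) /=.
apply: leq_trans (leq_addr _ _); apply: leq_sum => k Hk.
rewrite cards_draws exp1n muln1 leq_mul2l leq_exp2l //; apply/orP; right; lia.
Qed.

(* 5 ^ 3 <= 2 ^ 7 and 4 ^ (N - N %/ 10) >= 2 ^ (9 N / 5), so s <= 2 ^ (8 N / 15). *)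
Lemma small_subsets_exp_arith (s N : nat) :
  s * 4 ^ (N - N %/ 10) <= 5 ^ N -> s ^ 15 <= 2 ^ (8 * N).
Proof.
move=> hs.
have h5 : 5 ^ (15 * N) <= 2 ^ (35 * N).
  have [-> // | N_gt0] := posnP N.
  have -> : 15 * N = 3 * (5 * N) by rewrite mulnA.
  have -> : 35 * N = 7 * (5 * N) by rewrite mulnA.
  by rewrite [5 ^ _]expnM [2 ^ _]expnM leq_exp2r ?muln_gt0 ?N_gt0.
have h4 : 2 ^ (27 * N) <= (4 ^ (N - N %/ 10)) ^ 15.
  by rewrite -expnM (_ : 4 = 2 ^ 2) // -expnM leq_exp2l //; lia.
rewrite -(leq_pmul2r (expn_gt0 2 (27 * N))) -expnD.
apply: leq_trans (_ : (s * 4 ^ (N - N %/ 10)) ^ 15 <= _).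
  by rewrite expnMn leq_mul2l h4 orbT.
apply: leq_trans (_ : (5 ^ N) ^ 15 <= _); first by rewrite leq_exp2r.
by rewrite -expnM mulnC (_ : 8 * N + 27 * N = 35 * N) //; lia.
Qed.

Lemma card_small_subsets_exp (T : finType) (U : {set T}) :
  #|small_subsets U| ^ 15 <= 2 ^ (8 * #|U|).
Proof. exact/small_subsets_exp_arith/card_small_subsets. Qed.

Lemma mul2n_bin2 m : 2 * 'C(m, 2) = m * m.-1.
Proof.
by elim: m => [|m IH] //; rewrite binS bin1 mulnDr IH; case: m {IH} => //= m; ring.
Qed.

(* The hypothesis is what 2 q v <= v ^ 2 + q ^ 2 yields for a partition of n
   into p blocks when c counts the pairs in distinct blocks; the slack p absorbs
   the rounding of q = n %/ p. *)
Lemma leq_turan_of_sqr (n p c : nat) : 0 < p ->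
  2 * c + 2 * (n %/ p) * n <= n * n + p * (n %/ p * (n %/ p)) -> c <= turan n p + p.
Proof.
move=> p_gt0; rewrite /turan.
move: (n %/ p) (n %% p) (divn_eq n p) (ltn_pmod n p_gt0) => q r hn hr hc.
have hq : q * q.-1 + q = q * q by case: q {hn hc} => //= q; ring.
have hm : n * n.-1 + n = n * n by case: n {hn hc} => //= n; ring.
have key : c * 2 + r * (q.+1 * q) + (p - r) * (q * q.-1) <= n * n.-1 + 2 * p.
  have [s hs] : exists s, p = r + s by exists (p - r); lia.
  rewrite hs addKn; rewrite hs in hn hc.
  have h1 : q * n = r * (q * q) + s * (q * q) + r * q by rewrite hn; ring.
  have h2 : s * (q * q.-1) + s * q = s * (q * q) by rewrite -mulnDr hq.
  lia.
have e1 := mul2n_bin2 n.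
have f2 : r * (q.+1 * q) = 2 * (r * 'C(q.+1, 2)) by rewrite -mul2n_bin2 mulnCA.
have f3 : (p - r) * (q * q.-1) = 2 * ((p - r) * 'C(q, 2)) by rewrite -mul2n_bin2 mulnCA.
lia.
Qed.

Lemma sum_sqr_ge (I : finType) (v : I -> nat) (q : nat) :
  2 * q * \sum_i v i <= \sum_i v i * v i + #|I| * (q * q).
Proof.
rewrite big_distrr -sum_nat_const -big_split /=; apply: leq_sum => i _.
have : 0 <= (v i - q) * (v i - q) by []; nia.
Qed.

Section Blocks.
Variables (T : finType) (p : nat) (part : T -> 'I_p).

Definition block (i : 'I_p) : {set T} := [set x | part x == i].

Lemma sum_block (F : 'I_p -> nat) :
  \sum_(x : T) F (part x) = \sum_(i < p) #|block i| * F i.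
Proof.
rewrite (partition_big part predT) //=; apply: eq_bigr => i _.
rewrite (eq_bigr (fun _ => F i)); last by move=> x /eqP ->.
by rewrite sum_nat_const; congr (_ * _); apply: eq_card => x; rewrite !inE.
Qed.

Lemma sum_card_block : \sum_(i < p) #|block i| = #|T|.
Proof.
have := sum_block (fun _ => 1); rewrite sum1_card => ->.
by apply: eq_bigr => i _; rewrite muln1.
Qed.

Lemma card_pairs (P : T -> T -> bool) :
  #|[set xy : T * T | P xy.1 xy.2]| = \sum_(x : T) #|[set y | P x y]|.
Proof.
rewrite -sum1_card big_mkcond /=.
under [RHS]eq_bigr do rewrite -sum1_card big_mkcond /=.
by rewrite pair_bigA /=; apply: eq_bigr => -[x y] _; rewrite !inE.
Qed.

Lemma card_pairs_split_block :
  #|[set xy : T * T | part xy.1 != part xy.2]| + \sum_(i < p) #|block i| * #|block i|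
  = #|T| * #|T|.
Proof.
rewrite (card_pairs (fun x y => part x != part y)) -(sum_block (fun i => #|block i|)).
rewrite -big_split /=.
rewrite (eq_bigr (fun=> #|T|)) ?sum_nat_const // => x _.
rewrite -(cardsC (block (part x))) addnC; congr (_ + _); apply: eq_card => y.
by rewrite !inE eq_sym.
Qed.

End Blocks.

Definition cross_pairs n p (part : 'I_n -> 'I_p) : {set 'I_n * 'I_n} :=
  [set xy : 'I_n * 'I_n | (xy.1 < xy.2)%N && (part xy.1 != part xy.2)].

Lemma card_cross_pairs_sq n p (part : 'I_n -> 'I_p) :
  2 * #|cross_pairs part| + \sum_(i < p) #|block part i| * #|block part i| <= n * n.
Proof.
have := card_pairs_split_block part; rewrite card_ord => <-; rewrite leq_add2r.
have sub : cross_pairs part :|: swap @: cross_pairs part \subset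
           [set xy | part xy.1 != part xy.2].
  apply/subsetP => z; rewrite !inE => /orP[/andP[_ //] | /imsetP[[a b]]].
  by rewrite !inE /= => /andP[_ ?] ->; rewrite eq_sym.
have dis : [disjoint cross_pairs part & swap @: cross_pairs part].
  apply/pred0P => z /=; apply/negP => /andP[]; rewrite !inE => /andP[lt _] /imsetP[[a b]].
  by rewrite !inE /= => /andP[lt' _] E; move: lt lt'; rewrite E /=; lia.
have := subset_leq_card sub.
rewrite cardsU (disjoint_setI0 dis) cards0 subn0 card_imset ?addnn ?mul2n //.
exact: can_inj swapK.
Qed.

Lemma card_cross_pairs_le_turan n p (part : 'I_n -> 'I_p) : 0 < p ->
  #|cross_pairs part| <= turan n p + p.
Proof.
move=> p_gt0; apply: leq_turan_of_sqr => //.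
have := card_cross_pairs_sq part.
have := sum_sqr_ge (fun i => #|block part i|) (n %/ p).
rewrite sum_card_block !card_ord /=; lia.
Qed.

Section Orientations.
Variables (n : nat) (adj : rel 'I_n).
Implicit Types (o : {ffun 'I_n * 'I_n -> bool}).

Lemma orientationE o x y : is_orientation adj o -> o (x, y) = adj x y && ~~ o (y, x).
Proof.
move=> /forallP /(_ x) /forallP /(_ y) /andP[h1 h2].
case: (adj x y) h1 h2 => /=; last by case: (o (x, y)).
by move=> _ /eqP; case: (o (x, y)); case: (o (y, x)).
Qed.

Lemma orientation_diag o x : is_orientation adj o -> o (x, x) = false.
Proof. by move=> /(orientationE x x); case: (o (x, x)); rewrite ?andbF. Qed.

Lemma eq_orientation o1 o2 : is_orientation adj o1 -> is_orientation adj o2 ->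
  (forall x y : 'I_n, (x < y)%N -> o1 (x, y) = o2 (x, y)) -> o1 = o2.
Proof.
move=> h1 h2 lt_eq; apply/ffunP => -[x y]; case: (ltngtP x y) => [xy|yx|/val_inj ->].
- exact: lt_eq.
- by rewrite (orientationE x y h1) (orientationE x y h2) lt_eq.
- by rewrite !orientation_diag.
Qed.

Definition crossing (X1 X2 : {set 'I_n}) (x y : 'I_n) :=
  ((x \in X1) && (y \in X2)) || ((x \in X2) && (y \in X1)).

Definition edges_off (X1 X2 : {set 'I_n}) : {set 'I_n * 'I_n} :=
  [set xy : 'I_n * 'I_n |
    [&& (xy.1 < xy.2)%N, adj xy.1 xy.2 & ~~ crossing X1 X2 xy.1 xy.2]].

Definition sparse_orientations (X1 X2 : {set 'I_n}) : {set {ffun 'I_n * 'I_n -> bool}} :=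
  [set o | is_orientation adj o && (10 * dir_edges o X1 X2 < #|X1| * #|X2|)].

(* An orientation is determined by its edges from X1 to X2 together with its
   restriction to the edges not joining X1 and X2. *)
Lemma card_sparse_orientations (X1 X2 : {set 'I_n}) :
  #|sparse_orientations X1 X2| <= #|small_subsets (setX X1 X2)| * 2 ^ #|edges_off X1 X2|.
Proof.
pose dir o := [set xy : 'I_n * 'I_n | [&& xy.1 \in X1, xy.2 \in X2 & o xy]].
pose restr o := edges_off X1 X2 :&: [set xy | o xy].
have inj : {in sparse_orientations X1 X2 &, injective (fun o => (dir o, restr o))}.
  move=> o1 o2; rewrite !inE => /andP[h1 _] /andP[h2 _] [e_dir e_restr].
  have dirE x y : x \in X1 -> y \in X2 -> o1 (x, y) = o2 (x, y).
    by move=> hx hy; move/setP/(_ (x, y)): e_dir; rewrite !inE /= hx hy.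
  apply: (eq_orientation h1 h2) => x y lt.
  case hc: (crossing X1 X2 x y).
    case/orP: hc => /andP[hx hy]; first exact: dirE.
    by rewrite (orientationE x y h1) (orientationE x y h2) dirE.
  case ha: (adj x y); last by rewrite (orientationE x y h1) (orientationE x y h2) ha.
  by move/setP/(_ (x, y)): e_restr; rewrite !inE /= lt ha hc.
have sub : [set (dir o, restr o) | o in sparse_orientations X1 X2]
    \subset setX (small_subsets (setX X1 X2)) (powerset (edges_off X1 X2)).
  apply/subsetP => z /imsetP[o]; rewrite inE => /andP[_ ho] ->.
  rewrite !inE cardsX; apply/andP; split.
    by rewrite ho andbT; apply/subsetP => xy; rewrite !inE => /and3P[-> -> _].
  by apply/subsetP => xy; rewrite inE => /andP[].
by rewrite -(card_in_imset inj) -card_powerset -cardsX subset_leq_card.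
Qed.

End Orientations.

Section EdgeCounts.
Variables (n p : nat) (adj : rel 'I_n) (part : 'I_n -> 'I_p).

Definition inner_edges : {set 'I_n * 'I_n} :=
  [set xy : 'I_n * 'I_n | [&& (xy.1 < xy.2)%N, adj xy.1 xy.2 & part xy.1 == part xy.2]].

Lemma card_inner_edges : #|inner_edges| <= \sum_(i < p) edges_in adj part i.
Proof.
apply: leq_trans (card_big_setU _ _ _); apply: subset_leq_card.
apply/subsetP => xy; rewrite inE => /and3P[lt a /eqP e].
by apply/bigcupP; exists (part xy.1) => //; rewrite inE lt a e eqxx.
Qed.

(* Ordering each pair of X1 * X2 injects X1 * X2 into the cross pairs that are
   not edges off X1 and X2. *)
Lemma card_edges_off (i j : 'I_p) (X1 X2 : {set 'I_n}) :
  i != j -> X1 \subset block part i -> X2 \subset block part j ->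
  #|edges_off adj X1 X2| + #|X1| * #|X2| <= #|inner_edges| + #|cross_pairs part|.
Proof.
move=> ij sX1 sX2.
have pX1 x : x \in X1 -> part x = i by move/(subsetP sX1); rewrite inE => /eqP.
have pX2 x : x \in X2 -> part x = j by move/(subsetP sX2); rewrite inE => /eqP.
have pX12 x y : x \in X1 -> y \in X2 -> part x != part y by move=> /pX1 -> /pX2 ->.
pose sort2 (xy : 'I_n * 'I_n) := if (xy.1 < xy.2)%N then xy else swap xy.
have notX1 y : y \in X2 -> y \notin X1.
  by move=> hy; apply/negP => /pX12 /(_ hy); rewrite eqxx.
pose unsort (xy : 'I_n * 'I_n) := if xy.1 \in X1 then xy else swap xy.
have sort2K : {in setX X1 X2, cancel sort2 unsort}.
  move=> [a b]; rewrite inE /= => /andP[ha hb].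
  by rewrite /sort2 /unsort; case: (a < b)%N; rewrite /= ?ha ?(negbTE (notX1 _ hb)).
have sort2_inj := can_in_inj sort2K.
set W := sort2 @: setX X1 X2.
have W_cross : W \subset cross_pairs part.
  apply/subsetP => z /imsetP[[a b]]; rewrite !inE /= => /andP[ha hb] ->.
  have pab := pX12 _ _ ha hb; have ab : a != b by apply: contraNneq pab => ->.
  rewrite /sort2; case: ifP => /= lt; first by rewrite lt pab.
  by rewrite eq_sym pab andbT; move: ab; rewrite -val_eqE /=; lia.
have off_sub : edges_off adj X1 X2 \subset inner_edges :|: (cross_pairs part :\: W).
  apply/subsetP => -[x y]; rewrite !inE /= => /and3P[lt a hc].
  have [// | pxy] := boolP (part x == part y); first by rewrite lt a.
  apply/orP; right; apply/and3P; split => //.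
  apply/negP => /imsetP[[u v]]; rewrite !inE /= => /andP[hu hv].
  by rewrite /sort2; case: ifP => _ [xu yv]; move: hc; rewrite /crossing xu yv hu hv ?orbT.
apply: leq_trans (leq_add (subset_leq_card off_sub) (leqnn _)) _.
apply: leq_trans (leq_add (leq_card_setU _ _).1 (leqnn _)) _.
rewrite -addnA leq_add2l -(cardsID W (cross_pairs part)) (setIidPr W_cross).
by rewrite card_in_imset // cardsX addnC.
Qed.

End EdgeCounts.

(* In base 2 logarithms: log c <= a, log b <= 8 N / 15 + D, D <= e + t + p - N
   and e < N / 4; the factor 60 clears the denominators. *)
Lemma count_exponent_arith (c b s D N e t p a : nat) :
  c <= 2 ^ a -> b <= s * 2 ^ D -> s ^ 15 <= 2 ^ (8 * N) -> D + N <= e + t + p ->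
  4 * e < N -> 60 * (a + p + 1) <= 13 * N -> c * (2 * b) <= 2 ^ t.
Proof.
move=> hc hb hs hD he hN.
apply: leq_trans (_ : c * (2 * (s * 2 ^ D)) <= _).
  by rewrite leq_mul2l leq_mul2l hb !orbT.
rewrite -(leq_exp2r _ _ (isT : 0 < 60)).
have hc60 : c ^ 60 <= 2 ^ (a * 60) by rewrite expnM leq_exp2r.
have hs60 : s ^ 60 <= 2 ^ (N * 32).
  have -> : N * 32 = 8 * N * 4 by lia.
  by move: hs; rewrite -(leq_exp2r _ _ (isT : 0 < 4)) -!expnM.
rewrite -!expnM !expnMn -expnM.
apply: leq_trans (leq_mul hc60 (leq_mul (leqnn _) (leq_mul hs60 (leqnn _)))) _.
rewrite -!expnD leq_exp2l //; lia.
Qed.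

Lemma card_witness_type n p :
  #|{: ('I_p * 'I_p) * ({set 'I_n} * {set 'I_n})}| <= 2 ^ (2 * p + 2 * n).
Proof.
have card_setT (T : finType) : #|{: {set T}}| = 2 ^ #|T|.
  by rewrite -cardsT -card_powerset; apply: eq_card => A; rewrite !inE subsetT.
have hp : p <= 2 ^ p by rewrite ltnW // ltn_expl.
rewrite !card_prod !card_setT !card_ord !mul2n -!addnn !expnD.
by rewrite leq_mul // leq_mul.
Qed.

Local Open Scope ring_scope.

Lemma large_product_bounds (R : realFieldType) (delta : R) (n a b e K : nat) :
  0 < delta -> 2 * delta * n%:R < a%:R -> 2 * delta * n%:R < b%:R ->
  e%:R < delta ^+ 2 * n%:R ^+ 2 -> K%:R < 52 * delta ^+ 2 * n%:R ->
  (4 * e < a * b)%N /\ (K * n < 13 * (a * b))%N.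
Proof.
move=> d_gt0 ha hb he hK.
have x_ge0 : 0 <= 2 * delta * n%:R by rewrite !mulr_ge0 // ltW.
have hab : 4 * (delta ^+ 2 * n%:R ^+ 2) < a%:R * b%:R.
  have -> : 4 * (delta ^+ 2 * n%:R ^+ 2) = (2 * delta * n%:R) * (2 * delta * n%:R).
    by ring.
  by apply: ltr_pM.
split; rewrite -(ltr_nat R) !natrM; first lra.
have : K%:R * n%:R <= 52 * delta ^+ 2 * n%:R * n%:R :> R.
  by apply: ler_wpM2r => //; apply: ltW.
nra.
Qed.

Definition large_cross_pair (R : realType) n p (delta : R) (part : 'I_n -> 'I_p)
    (w : ('I_p * 'I_p) * ({set 'I_n} * {set 'I_n})) : bool :=
  [&& w.1.1 != w.1.2, w.2.1 \subset block part w.1.1, w.2.2 \subset block part w.1.2,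
      2 * delta * n%:R < #|w.2.1|%:R & 2 * delta * n%:R < #|w.2.2|%:R].

Lemma not_relevant_cover (R : realType) n p (delta : R) (adj : rel 'I_n)
    (part : 'I_n -> 'I_p) :
  [set o | is_orientation adj o && ~~ relevant delta part o] \subset
  \bigcup_(w | large_cross_pair delta part w) sparse_orientations adj w.2.1 w.2.2.
Proof.
apply/subsetP => o; rewrite inE => /andP[ho].
move=> /forallPn[i] /forallPn[j] /forallPn[X1] /forallPn[X2].
rewrite negb_imply => /andP[hw]; rewrite -ltNge => sparse.
apply/bigcupP; exists ((i, j), (X1, X2)) => //; rewrite inE ho /= -(ltr_nat R).
by rewrite !natrM ltr_pdivlMr ?ltr0n // in sparse; rewrite !natrM mulrC.
Qed.

Theorem mainTheorem9 (R : realType) (p : nat) (delta : R) :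
  (2 <= p)%N -> 0 < delta ->
  exists N : nat, forall n : nat, (N <= n)%N ->
    forall (adj : rel 'I_n), irreflexive adj -> symmetric adj ->
    forall part : 'I_n -> 'I_p,
      (\sum_(i < p) edges_in adj part i)%:R < delta ^+ 2 * (n%:R) ^+ 2 ->
      (#|[set o : {ffun 'I_n * 'I_n -> bool} |
           is_orientation adj o && ~~ relevant delta part o]|
        <= 2 ^ (turan n p - 1))%N.
Proof.
(* K n bounds 60 (3 p + 2 n + 1), the exponent needed by count_exponent_arith. *)
move=> p2 d_gt0; set K := (180 * p + 180)%N.
have [N0 large_n] : exists N0, forall n, (N0 <= n)%N -> K%:R < 52 * delta ^+ 2 * n%:R.
  have c_gt0 : 0 < 52 * delta ^+ 2 by rewrite mulr_gt0 // exprn_gt0.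
  exists (Num.bound ((52 * delta ^+ 2)^-1 * K%:R)) => n hn.
  rewrite -ltr_pdivrMl // (lt_le_trans (archi_boundP _)) ?ler_nat //.
  by rewrite mulr_ge0 // invr_ge0 ltW.
exists N0.+1 => n hn adj _ _ part he.
apply: card_cover_leq_half (not_relevant_cover delta adj part) _.
move=> [[i j] [X1 X2]] /and5P[/= ij sX1 sX2 hX1 hX2].
have [he4 hKn] := large_product_bounds d_gt0 hX1 hX2 he (large_n n (ltnW hn)).
apply: (@count_exponent_arith _ _ _ _ _ (\sum_(i < p) edges_in adj part i) _ p _
          (card_witness_type n p) (card_sparse_orientations adj X1 X2)
          (card_small_subsets_exp _)); rewrite ?cardsX //; last first.
  have n_gt0 : (0 < n)%N by rewrite (leq_ltn_trans _ hn).
  have pn : (p <= p * n)%N by rewrite leq_pmulr.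
  by apply: leq_trans (ltnW hKn); rewrite /K; lia.
have := card_edges_off adj ij sX1 sX2; have := card_inner_edges adj part.
have := card_cross_pairs_le_turan part (ltnW p2); lia.
Qed.
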